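(* Let $m\ge3$, $\mu\ge0$, and $c\in\mathbb{R}^m_{\ge0}$. For any demand vectors $d=(d_L,d_R)$ and $d'=(d'_L,d'_R)$ with $d_L,d'_L\in\Delta^L$ and $d_R,d'_R\in\Delta^R$, $$\mathrm{OPT}_\mu(d)\le\mathrm{OPT}_\mu(d')+\big(2\|c\|_\infty+66\mu\log m\big)\|d-d'\|_1+\mu m^{-30}.$$
   Context: $L,R$ are finite nonempty sets, $m=|L||R|$, and coordinates of $\mathbb{R}^m$ are indexed by pairs $(i,j)\in L\times R$. $\mathbf{B}\in\{0,1\}^{m\times(|L|+|R|)}$ is the unsigned edge-vertex incidence matrix of the complete bipartite graph on $L\cup R$: $\mathbf{B}_{(i,j),v}=1$ iff $v\in\{i,j\}$. $H(x)=\sum_i x_i\log x_i$ ($0\log0=0$, natural log). $\mathrm{OPT}_\mu(d)=\min_{x\in\Delta^m,\ \mathbf{B}^\top x=d}\ \langle c,x\rangle+\mu H(x)$. $\Delta^k$ denotes the probability simplex. *)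

From HB Require Import structures.
From mathcomp Require Import all_boot all_order all_algebra.
From mathcomp Require Import all_classical all_reals all_analysis.
Set Implicit Arguments. Unset Strict Implicit. Unset Printing Implicit Defensive.
Import Order.TTheory GRing.Theory Num.Theory.
Local Open Scope ring_scope.
Local Open Scope classical_set_scope.

Section Defs.
Variables (R : realType) (L Rt : finType).

(* Unsigned edge-vertex incidence matrix of the complete bipartite graph on
   L ⊔ Rt (vertices are inl i, inr j; edges are pairs (i,j)). *)
Definition incB (e : L * Rt) (v : L + Rt) : R :=
  match v with
  | inl i => if i == e.1 then 1 else 0
  | inr j => if j == e.2 then 1 else 0
  end.

Definition Bt (x : L * Rt -> R) (v : L + Rt) : R :=
  \sum_(e : L * Rt) incB e v * x e.

Definition in_simplex (T : finType) (x : T -> R) : Prop :=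
  (forall t, 0 <= x t) /\ \sum_(t : T) x t = 1.

Definition negent (x : L * Rt -> R) : R :=
  \sum_(e : L * Rt) (if x e == 0 then 0 else x e * ln (x e)).

Definition objective (c : L * Rt -> R) (mu : R) (x : L * Rt -> R) : R :=
  \sum_(e : L * Rt) c e * x e + mu * negent x.

(* OPT_mu(d) = min { <c,x> + mu H(x) | x in Delta^m, B^T x = d }
   (stated as the infimum; it is attained whenever the set is nonempty) *)
Definition OPT (c : L * Rt -> R) (mu : R) (d : L + Rt -> R) : R :=
  inf [set objective c mu x | x in [set x | in_simplex x /\ Bt x = d]].

Definition demand (d : L + Rt -> R) : Prop :=
  in_simplex (fun i : L => d (inl i)) /\ in_simplex (fun j : Rt => d (inr j)).

Definition norm1 (d : L + Rt -> R) : R := \sum_(v : L + Rt) `|d v|.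

Definition normInf (c : L * Rt -> R) : R := \big[Num.max/0]_(e : L * Rt) `|c e|.

End Defs.

From HB Require Import structures.
From mathcomp Require Import all_boot all_order all_algebra.
From mathcomp Require Import all_classical all_reals all_analysis.
From mathcomp Require Import lra.
Import Order.TTheory GRing.Theory Num.Theory.
Local Open Scope ring_scope.
Set Implicit Arguments. Unset Strict Implicit.

(* Given a plan x' feasible for d', scale each entry x'(i,j) down by
   min(1, d_i/d'_i, d_j/d'_j).  The result y <= x' has marginals below d and
   loses mass s = 1 - sum y <= |d - d'|_1.  Adding the product of the residual
   marginals divided by s gives a plan x >= y feasible for d, with
   sum (x - y) = sum (x' - y) = s.  The cost grows by at most |c|_oo s.  Entrywise,
   t log t grows by at most x - y where it increases (tangent line, log <= 0 on
   [0,1]) and by at most 31 log m (x' - y) + m^-31 where it decreases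
   (superadditivity, and -t log t <= K t log m + m^-K); summing over the m entries
   and using 1 + 31 log m <= 66 log m for m >= 3 gives the bound. *)

Section XlnX.
Variable R : realType.
Implicit Types t u v a b m : R.

Lemma ln_le_subr1 t : 0 < t -> ln t <= t - 1.
Proof.
by move=> t0; have := @le_ln1Dx R (t - 1); rewrite addrCA subrr addr0; apply; lra.
Qed.

Lemma subr1V_le_ln t : 0 < t -> 1 - t^-1 <= ln t.
Proof.
move=> t0; have := @ln_le_subr1 t^-1; rewrite invr_gt0 lnV ?posrE // => /(_ t0).
lra.
Qed.

Lemma xlnx_ge_N1 u : 0 <= u -> -1 <= u * ln u.
Proof.
rewrite le_eqVlt => /predU1P[<-|u0]; first by rewrite mul0r; lra.
have := @ln_le_subr1 u^-1; rewrite invr_gt0 lnV ?posrE // => /(_ u0) h.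
have : u * - ln u <= u * (u^-1 - 1) by apply: ler_wpM2l; [exact: ltW | lra].
rewrite mulrBr mulr1 divff ?gt_eqF //; lra.
Qed.

Lemma xlnx_sub_le_tangent u v : 0 <= u -> 0 < v ->
  v * ln v - u * ln u <= (1 + ln v) * (v - u).
Proof.
rewrite le_eqVlt => /predU1P[<-|u0] v0.
  by rewrite mul0r !subr0 mulrDl mul1r mulrC lerDr ltW.
have := ln_le_subr1 (divr_gt0 v0 u0); rewrite ln_div ?posrE // => h.
have : u * (ln v - ln u) <= u * (v / u - 1) by apply: ler_wpM2l; [exact: ltW | lra].
have -> : u * (v / u - 1) = v - u by rewrite mulrBr mulr1 mulrCA divff ?gt_eqF ?mulr1.
nra.
Qed.

Lemma xlnx_superadditive u v : 0 <= u -> 0 < v ->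
  u * ln u + v * ln v <= (u + v) * ln (u + v).
Proof.
move=> u0 v0; rewrite mulrDl; apply: lerD; last first.
  by apply: ler_wpM2l; [exact: ltW | rewrite ler_ln ?posrE; lra].
move: u0; rewrite le_eqVlt => /predU1P[<-|u0]; first by rewrite !mul0r.
by apply: ler_wpM2l; [exact: ltW | rewrite ler_ln ?posrE; lra].
Qed.

(* Instance of [ln z <= z - 1] at [z = t^-1 m^-K]. *)
Lemma Nxlnx_le t m (K : nat) : 0 < t -> 1 <= m ->
  - (t * ln t) <= K%:R * ln m * t + m ^- K.
Proof.
move=> t0 m1; have mK : 0 < m ^+ K by rewrite exprn_gt0 //; lra.
have tmK : 0 < (t * m ^+ K)^-1 by rewrite invr_gt0 mulr_gt0.
have := ln_le_subr1 tmK.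
rewrite lnV ?posrE ?mulr_gt0 // lnM ?posrE // lnXn; last lra.
rewrite invfM => h.
have : t * - (ln t + ln m *+ K) <= t * (t^-1 * m ^- K - 1).
  by apply: ler_wpM2l; [exact: ltW | lra].
rewrite mulrBr mulrA divff ?gt_eqF // mul1r mulr1 -mulr_natr.
have : 0 <= m ^- K by rewrite invr_ge0 ltW.
nra.
Qed.

Lemma xlnx_sub_le u v a b m (K : nat) : 0 <= u -> 0 <= v -> v <= 1 ->
  0 <= a -> 0 <= b -> v - u <= a -> u - v <= b -> 1 <= m ->
  v * ln v - u * ln u <= a + K%:R * ln m * b + m ^- K.
Proof.
move=> u0 v0 v1 a0 b0 vua uvb m1.
have Km : 0 <= K%:R * ln m * b by rewrite !mulr_ge0 // ln_ge0.
have mK : 0 <= m ^- K by rewrite invr_ge0 exprn_ge0 //; lra.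
have [uv|vu] := leP u v.
  move: v0; rewrite le_eqVlt => /predU1P[v0|v0].
    have u0' : u = 0 by lra.
    by rewrite -v0 u0' mul0r subrr; lra.
  have := xlnx_sub_le_tangent u0 v0; have := ln_le0 v1; nra.
have uv0 : 0 < u - v by lra.
have := xlnx_superadditive v0 uv0; rewrite (addrC v) subrK.
have := Nxlnx_le K uv0 m1.
have : K%:R * ln m * (u - v) <= K%:R * ln m * b.
  by rewrite ler_wpM2l // mulr_ge0 // ln_ge0.
lra.
Qed.

End XlnX.

Section Plans.
Variables (R : realType) (L Rt : finType).
Local Notation T := (L * Rt)%type.
Implicit Types (x y : T -> R) (f d : L + Rt -> R).

Lemma sum_pair_rows (F : T -> R) : \sum_e F e = \sum_i \sum_j F (i, j).
Proof. by rewrite pair_big; apply: eq_bigr => -[]. Qed.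

Lemma sum_pair_cols (F : T -> R) : \sum_e F e = \sum_j \sum_i F (i, j).
Proof. by rewrite sum_pair_rows exchange_big. Qed.

Lemma Bt_inl x i : Bt x (inl i) = \sum_j x (i, j).
Proof.
rewrite /Bt sum_pair_rows (bigD1 i) //= [X in _ + X]big1 ?addr0.
  by apply: eq_bigr => j _; rewrite eqxx mul1r.
by move=> i' i'i; apply: big1 => j _; rewrite eq_sym (negbTE i'i) mul0r.
Qed.

Lemma Bt_inr x j : Bt x (inr j) = \sum_i x (i, j).
Proof.
rewrite /Bt sum_pair_cols (bigD1 j) //= [X in _ + X]big1 ?addr0.
  by apply: eq_bigr => i _; rewrite eqxx mul1r.
by move=> j' j'j; apply: big1 => i _; rewrite eq_sym (negbTE j'j) mul0r.
Qed.

Lemma sum_Bt_inl x : \sum_i Bt x (inl i) = \sum_e x e.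
Proof. by rewrite sum_pair_rows; apply: eq_bigr => i _; rewrite Bt_inl. Qed.

Lemma sum_Bt_inr x : \sum_j Bt x (inr j) = \sum_e x e.
Proof. by rewrite sum_pair_cols; apply: eq_bigr => j _; rewrite Bt_inr. Qed.

Lemma BtD x y : Bt (fun e => x e + y e) =1 Bt x \+ Bt y.
Proof. by move=> v /=; rewrite /Bt -big_split; apply: eq_bigr => e _; rewrite mulrDr. Qed.

Lemma sum_mul_Bt f x :
  \sum_v f v * Bt x v = \sum_e x e * (f (inl e.1) + f (inr e.2)).
Proof.
under [RHS]eq_bigr do rewrite mulrDr.
rewrite big_split big_sumType /=; congr (_ + _).
  rewrite sum_pair_rows; apply: eq_bigr => i _; rewrite Bt_inl mulr_sumr.
  by apply: eq_bigr => j _; rewrite mulrC.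
rewrite sum_pair_cols; apply: eq_bigr => j _; rewrite Bt_inr mulr_sumr.
by apply: eq_bigr => i _; rewrite mulrC.
Qed.

Lemma simplex_le1 (I : finType) (x : I -> R) i : in_simplex x -> x i <= 1.
Proof.
by case=> x0 <-; rewrite (bigD1 i) //= lerDl; apply: sumr_ge0 => k _.
Qed.

Lemma demand_ge0 d v : demand d -> 0 <= d v.
Proof. by case: v => [i|j] [[d0 _] [d0' _]]. Qed.

Lemma sum_divK (I : finType) (F : I -> R) s i :
  (forall k, 0 <= F k) -> \sum_k F k = s -> F i * s / s = F i.
Proof.
move=> F0 Fs; have [s0|s0] := eqVneq s 0; last by rewrite mulfK.
have /psumr_eq0P Fi0 : \sum_k F k = 0 by rewrite Fs.
by rewrite Fi0 ?mul0r // => k _.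
Qed.

Definition coupling (a : L -> R) (b : Rt -> R) (s : R) (e : T) : R :=
  a e.1 * b e.2 / s.

Section Coupling.
Variables (a : L -> R) (b : Rt -> R) (s : R).
Hypotheses (a0 : forall i, 0 <= a i) (b0 : forall j, 0 <= b j).
Hypotheses (sum_a : \sum_i a i = s) (sum_b : \sum_j b j = s).

Lemma coupling_ge0 e : 0 <= coupling a b s e.
Proof.
by rewrite divr_ge0 ?mulr_ge0 // -sum_a sumr_ge0.
Qed.

Lemma Bt_coupling v :
  Bt (coupling a b s) v = match v with inl i => a i | inr j => b j end.
Proof.
case: v => [i|j]; rewrite (Bt_inl, Bt_inr) -mulr_suml /=.
  by rewrite -mulr_sumr sum_b (sum_divK i a0 sum_a).
by rewrite -mulr_suml sum_a (mulrC s) (sum_divK j b0 sum_b).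
Qed.

Lemma sum_coupling : \sum_e coupling a b s e = s.
Proof. by rewrite -sum_Bt_inl; under eq_bigr do rewrite Bt_coupling. Qed.

End Coupling.

Lemma demand_feasible d : demand d -> exists x, in_simplex x /\ Bt x = d.
Proof.
case=> -[a0 a1] [b0 b1].
exists (coupling (fun i => d (inl i)) (fun j => d (inr j)) 1); split.
  by split; [exact: coupling_ge0 | exact: sum_coupling].
by apply: boolp.funext => -[i|j]; rewrite Bt_coupling.
Qed.

Lemma mul_div_le (a a' : R) : 0 <= a -> a' * (a / a') <= a.
Proof.
by have [->|a'0] := eqVneq a' 0; rewrite ?mul0r // mulrCA divff ?mulr1.
Qed.

Lemma normB1_div_mul_le (a a' : R) : 0 <= a' -> `|1 - a / a'| * a' <= `|a - a'|.
Proof.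
move=> a'0; have [->|a'n0] := eqVneq a' 0; first by rewrite mulr0.
by rewrite -[X in _ * X]ger0_norm // -normrM mulrBl mul1r mulfVK // distrC.
Qed.

Section Truncation.
Variables (d d' : L + Rt -> R) (x' : T -> R).
Hypotheses (hd : demand d) (hd' : demand d') (hx' : in_simplex x').
Hypothesis Bx' : Bt x' = d'.

Definition ratio v := d v / d' v.

(* When [d' v = 0] the ratio is the junk value [0]; harmless, as the entries of
   [x'] incident to [v] then vanish. *)
Definition clip (e : T) :=
  Num.min (Num.min 1 (ratio (inl e.1))) (ratio (inr e.2)).

Definition trunc e := x' e * clip e.

Definition deficit := 1 - \sum_e trunc e.

Definition residual v := d v - Bt trunc v.

Definition plan e :=
  trunc e + coupling (fun i => residual (inl i)) (fun j => residual (inr j)) deficit e.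

Lemma ratio_ge0 v : 0 <= ratio v.
Proof. by rewrite divr_ge0 ?demand_ge0. Qed.

Lemma clip_ge0 e : 0 <= clip e.
Proof. by rewrite !le_min ler01 !ratio_ge0. Qed.

Lemma clip_le1 e : clip e <= 1.
Proof. by rewrite !ge_min lexx. Qed.

Lemma incB_clip_le e v : incB R e v * clip e <= incB R e v * ratio v.
Proof.
case: v => [i|j] /=; case: eqP => [->|_]; rewrite ?mul0r ?mul1r //.
  by rewrite !ge_min lexx orbT.
by rewrite ge_min lexx orbT.
Qed.

Lemma subr1_clip_le e :
  1 - clip e <= `|1 - ratio (inl e.1)| + `|1 - ratio (inr e.2)|.
Proof.
have := ler_norm (1 - ratio (inl e.1)); have := normr_ge0 (1 - ratio (inl e.1)).
have := ler_norm (1 - ratio (inr e.2)); have := normr_ge0 (1 - ratio (inr e.2)).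
move: (`|_|) (`|_|) => n2 n1 n20 n2r n10 n1r.
suff : 1 - n1 - n2 <= clip e by lra.
by rewrite !le_min -!andbA; apply/and3P; split; lra.
Qed.

Lemma trunc_ge0 e : 0 <= trunc e.
Proof. by rewrite mulr_ge0 ?clip_ge0 //; case: hx'. Qed.

Lemma trunc_le e : trunc e <= x' e.
Proof. by rewrite -[leRHS]mulr1 ler_wpM2l ?clip_le1 //; case: hx'. Qed.

Lemma Bt_trunc_le v : Bt trunc v <= d v.
Proof.
apply: le_trans (mul_div_le (d' v) (demand_ge0 v hd)).
rewrite -{1}Bx' /Bt mulr_suml; apply: ler_sum => e _.
have x'0 : 0 <= x' e by case: hx'.
have := incB_clip_le e v; rewrite /trunc /ratio; nra.
Qed.

Lemma residual_ge0 v : 0 <= residual v.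
Proof. by rewrite subr_ge0 Bt_trunc_le. Qed.

Lemma sum_residual_inl : \sum_i residual (inl i) = deficit.
Proof. by rewrite sumrB sum_Bt_inl; case: hd => -[_ ->]. Qed.

Lemma sum_residual_inr : \sum_j residual (inr j) = deficit.
Proof. by rewrite sumrB sum_Bt_inr; case: hd => _ [_ ->]. Qed.

Lemma sum_sub_trunc : \sum_e (x' e - trunc e) = deficit.
Proof. by rewrite sumrB; case: hx' => _ ->. Qed.

Lemma deficit_le_norm1 : deficit <= norm1 (fun v => d v - d' v).
Proof.
rewrite -sum_sub_trunc.
apply: (le_trans (y := \sum_e x' e * (`|1 - ratio (inl e.1)| + `|1 - ratio (inr e.2)|))).
  apply: ler_sum => e _; rewrite /trunc -[X in X - _]mulr1 -mulrBr.
  by apply: ler_wpM2l; [case: hx' | exact: subr1_clip_le].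
rewrite -(sum_mul_Bt (fun v => `|1 - ratio v|)) Bx'; apply: ler_sum => v _.
exact/normB1_div_mul_le/demand_ge0.
Qed.

Lemma plan_feasible : in_simplex plan /\ Bt plan = d.
Proof.
have a0 i : 0 <= residual (inl i) by exact: residual_ge0.
have b0 j : 0 <= residual (inr j) by exact: residual_ge0.
have E0 := coupling_ge0 a0 b0 sum_residual_inl.
have BtE := Bt_coupling a0 b0 sum_residual_inl sum_residual_inr.
split; first split.
- by move=> e; rewrite addr_ge0 ?trunc_ge0.
- rewrite big_split /= (sum_coupling a0 b0 sum_residual_inl sum_residual_inr).
  by rewrite addrC; apply: subrK.
apply: boolp.funext => v; rewrite BtD /= BtE.
by case: v => [i|j]; rewrite addrC subrK.
Qed.

Lemma trunc_le_plan e : trunc e <= plan e.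
Proof.
by rewrite lerDl coupling_ge0 ?sum_residual_inl // => v; apply: residual_ge0.
Qed.

Lemma sum_sub_plan : \sum_e (plan e - trunc e) = deficit.
Proof.
under eq_bigr do rewrite /plan addrAC subrr add0r.
by rewrite sum_coupling ?sum_residual_inl ?sum_residual_inr // => v; apply: residual_ge0.
Qed.

End Truncation.
End Plans.

Section Objective.
Variables (R : realType) (L Rt : finType).
Local Notation T := (L * Rt)%type.
Implicit Types (c x y : T -> R).

Lemma negentE x : negent x = \sum_e x e * ln (x e).
Proof. by apply: eq_bigr => e _; case: eqP => [->|]; rewrite ?mul0r. Qed.

Lemma normInf_ge c e : `|c e| <= normInf c.
Proof. by rewrite /normInf (bigD1 e) //= le_max lexx. Qed.

Lemma normInf_ge0 c : 0 <= normInf c.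
Proof. by rewrite /normInf; elim/big_ind: _ => // a b ha hb; rewrite le_max ha. Qed.

Lemma objective_ge c mu x : 0 <= mu -> (forall e, 0 <= c e) -> in_simplex x ->
  - (mu * #|{: T}|%:R) <= objective c mu x.
Proof.
move=> mu0 c0 [x0 _]; rewrite /objective negentE.
have cx0 : 0 <= \sum_e c e * x e by apply: sumr_ge0 => e _; rewrite mulr_ge0.
have : - #|{: T}|%:R <= \sum_e x e * ln (x e).
  by rewrite -sumr_const -sumrN; apply: ler_sum => e _; exact: xlnx_ge_N1.
move/(ler_wpM2l mu0); nra.
Qed.

Lemma cost_le_shift c x x' y : (forall e, 0 <= c e) ->
  (forall e, y e <= x e) -> (forall e, y e <= x' e) ->
  \sum_e c e * x e <= \sum_e c e * x' e + normInf c * \sum_e (x e - y e).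
Proof.
move=> c0 yx yx'; rewrite mulr_sumr -big_split /=; apply: ler_sum => e _.
have : c e * y e <= c e * x' e by rewrite ler_wpM2l.
have : c e * (x e - y e) <= normInf c * (x e - y e).
  by rewrite ler_wpM2r ?subr_ge0 // (le_trans (ler_norm _) (normInf_ge c e)).
lra.
Qed.

Lemma negent_le_shift x x' y m (K : nat) : in_simplex x -> in_simplex x' ->
  (forall e, y e <= x e) -> (forall e, y e <= x' e) -> 1 <= m ->
  negent x <= negent x' + \sum_e (x e - y e)
    + K%:R * ln m * \sum_e (x' e - y e) + #|{: T}|%:R * m ^- K.
Proof.
move=> hx [x'0 _] yx yx' m1.
have -> : #|{: T}|%:R * m ^- K = \sum_(e : T) m ^- K by rewrite sumr_const mulr_natl.
rewrite !negentE mulr_sumr -!big_split /=.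
apply: ler_sum => e _; rewrite -!addrA -lerBlDl !addrA.
apply: xlnx_sub_le => //; rewrite ?subr_ge0 ?lerD2l ?lerN2 //.
- by case: hx.
- exact: simplex_le1.
Qed.

End Objective.

Section Infimum.
Variable R : realType.
Local Open Scope classical_set_scope.

Lemma inf_le_infD (S S' : set R) (K : R) : has_lbound S -> S' !=set0 ->
  (forall y, S' y -> exists2 x, S x & x <= y + K) -> inf S <= inf S' + K.
Proof.
move=> lbS S'0 SS'; rewrite -lerBlDr; apply: lb_le_inf => // y S'y.
have [x Sx xy] := SS' y S'y; rewrite lerBlDr.
exact: le_trans (ge_inf lbS Sx) xy.
Qed.

End Infimum.

Lemma OPT_le_shift (R : realType) (L Rt : finType) (c : L * Rt -> R) (mu K : R)
    (d d' : L + Rt -> R) : 0 <= mu -> (forall e, 0 <= c e) -> demand d' ->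
  (forall x', in_simplex x' -> Bt x' = d' ->
     exists2 x, in_simplex x /\ Bt x = d & objective c mu x <= objective c mu x' + K) ->
  OPT c mu d <= OPT c mu d' + K.
Proof.
move=> mu0 c0 hd' H; apply: inf_le_infD.
- by exists (- (mu * #|{: L * Rt}|%:R)) => _ [x [hx _] <-]; exact: objective_ge.
- by have [x hx] := demand_feasible hd'; exists (objective c mu x), x.
move=> _ [x' [hx' Bx'] <-]; have [x hx ?] := H x' hx' Bx'.
by exists (objective c mu x) => //; exists x.
Qed.

Unset Implicit Arguments.
Theorem mainTheorem12 (R : realType) (L Rt : finType)
  (hL : (0 < #|L|)%N) (hR : (0 < #|Rt|)%N)
  (hm : (3 <= #|L| * #|Rt|)%N)
  (mu : R) (hmu : 0 <= mu)
  (c : L * Rt -> R) (hc : forall e, 0 <= c e)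
  (d d' : L + Rt -> R) (hd : demand d) (hd' : demand d') :
  let m : R := (#|L| * #|Rt|)%:R in
  OPT c mu d <= OPT c mu d'
    + (2 * normInf c + 66 * mu * ln m) * norm1 (fun v => d v - d' v)
    + mu * m ^- 30.
Proof.
cbv zeta; set m : R := (#|L| * #|Rt|)%:R.
have m3 : 3 <= m by rewrite (ler_nat R 3).
have m1 : 1 <= m by lra.
have lnm : 1 + 31 * ln m <= 66 * ln m.
  have := @subr1V_le_ln R m; have : m^-1 <= 3^-1 by rewrite lef_pV2 ?posrE; lra.
  lra.
have mK : #|{: L * Rt}|%:R * m ^- 31 = m ^- 30.
  by rewrite card_prod exprS invfM mulrA mulfV ?mul1r // gt_eqF //; lra.
rewrite -addrA; apply: OPT_le_shift => // x' hx' Bx'.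
have [hx Bx] := plan_feasible hd hd' hx' Bx'.
exists (plan d d' x'); first by split.
have yx := trunc_le_plan hd hx' Bx'; have yx' := trunc_le d d' hx'.
have := cost_le_shift hc yx yx'.
have := negent_le_shift 31 hx hx' yx yx' m1.
rewrite mK (sum_sub_plan hd hx' Bx') (sum_sub_trunc d d' hx') /objective.
have := deficit_le_norm1 d hd' hx' Bx'.
have : 0 <= deficit d d' x'.
  by rewrite -(sum_sub_trunc d d' hx'); apply: sumr_ge0 => e _; rewrite subr_ge0.
move: (deficit _ _ _) (norm1 _) (normInf_ge0 c) => s dl s0 sdl N0 hH hC.
have : mu * (s + 31 * ln m * s) <= mu * (66 * ln m * dl).
  by rewrite ler_wpM2l //; nra.
have : normInf c * s <= 2 * normInf c * dl by nra.
nra.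
Qed.
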